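(* Consider the disturbance-free discrete-time system $$x(t+1)=A\,Z(x(t))+B\,u(t),\qquad Z(x)=\begin{bmatrix}x\\ S(x)\end{bmatrix}\in\mathbb{R}^{n+N},$$ with unknown $A=[A_1\ \ A_2]$ ($A_1\in\mathbb{R}^{n\times n}$, $A_2\in\mathbb{R}^{n\times N}$), unknown $B\in\mathbb{R}^{n\times m}$, and known $S:\mathbb{R}^n\to\mathbb{R}^N$ differentiable with $S(0)=0$. Let $A_s=\frac{\partial S}{\partial x}(0)$, $Q(x)=S(x)-A_sx$, $\bar A_1=A_1+A_2A_s$, and assume $(\bar A_1,B)$ is stabilizable and $Q$ is Lipschitz on the safe set $\mathcal{S}(F,g)=\{x\in\mathbb{R}^n: Fx\le g\}$, where $F\in\mathbb{R}^{s\times n}$, $g\in\mathbb{R}^s$ and $\mathcal{S}(F,g)$ is a polyhedral C-set. Let data $U_0,X_0,X_1,V_0$ be collected from this system (with no disturbance), with $V_0$ of full row rank and $T\ge n+N+1$. Let $\lambda\in(0,1]$. Suppose there exist $G_K=[G_{K,1}\ \ G_{K,2}]\in\mathbb{R}^{T\times(n+N)}$ and $P_s\in\mathbb{R}^{s\times s}$ such that $$P_sg\le\lambda g-l^d,\qquad P_sF=FX_1G_{K,1},\qquad V_0G_K=I,\qquad P_s\ge 0,$$ where $l^d=[l^d_1,\dots,l^d_s]^T$ with $$l^d_i=\min_{G_{K,2}}\ \max_{x:\,Fx\le g}\ F_iX_1G_{K,2}\,Q(x),\quad i=1,\dots,s,$$ and where the matrix $G_{K,2}$ in $G_K$ attains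 each of these minima, i.e. $\max_{x:\,Fx\le g}F_iX_1G_{K,2}Q(x)=l^d_i$ for all $i$. Then, with $K_1=U_0G_{K,1}$ and $K_2=U_0G_{K,2}$, the safe set $\mathcal{S}(F,g)$ is $\lambda$-contractive (and hence robustly invariant) for the closed-loop system under the controller $u(t)=K_1x(t)+K_2Q(x(t))$.
   Context: Data: inputs $u(0),\dots,u(T-1)$ are applied to the system and states $x(0),\dots,x(T)$ recorded; $U_0=[u(0)\cdots u(T-1)]\in\mathbb{R}^{m\times T}$, $X_0=[x(0)\cdots x(T-1)]\in\mathbb{R}^{n\times T}$, $X_1=[x(1)\cdots x(T)]\in\mathbb{R}^{n\times T}$, $V_0=\begin{bmatrix}X_0\\ Q(X_0)\end{bmatrix}\in\mathbb{R}^{(n+N)\times T}$ with $Q(X_0)=[Q(x(0))\cdots Q(x(T-1))]$. $G_{K,1}\in\mathbb{R}^{T\times n}$, $G_{K,2}\in\mathbb{R}^{T\times N}$. $F_i$ denotes the $i$-th row of $F$. Vector/matrix inequalities are elementwise; $P_s\ge0$ means all entries of $P_s$ are nonnegative. A polyhedral C-set is a compact convex polyhedron containing the origin in its interior. For $\lambda\in(0,1]$, a set $\mathcal{P}=\{x:Fx\le g\}$ is $\lambda$-contractive for the closed-loop system if $x(t)\in\mathcal{P}$ implies $x(t+1)\in\lambda\mathcal{P}=\{x:Fx\le\lambda g\}$ for all $t$ (and all admissible disturbances); it is robustly invariant if $x(0)\in\mathcal{P}$ implies $x(t)\in\mathcal{P}$ for all $t\ge0$. *)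

From HB Require Import structures.
From mathcomp Require Import all_boot all_order all_algebra.
From mathcomp Require Import all_classical all_reals all_analysis.
From mathcomp Require Import complex.
Set Implicit Arguments. Unset Strict Implicit. Unset Printing Implicit Defensive.
Import Order.TTheory GRing.Theory Num.Theory numFieldNormedType.Exports.
Local Open Scope ring_scope.
Local Open Scope classical_set_scope.

Section Defs.
Variable R : realType.

Definition mx_le (p q : nat) (M1 M2 : 'M[R]_(p, q)) : Prop :=
  forall i j, M1 i j <= M2 i j.

Definition safe_set (s n : nat) (F : 'M[R]_(s, n)) (g : 'cV[R]_s) : set 'cV[R]_n :=
  [set x | mx_le (F *m x) g].

(* Polyhedral C-set: compact convex polyhedron containing 0 in its interior.
   {x : Fx <= g} is always a convex polyhedron, so the remaining requirements
   are compactness and 0 in the interior. *)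
Definition polyhedral_Cset (s n : nat) (F : 'M[R]_(s, n)) (g : 'cV[R]_s) : Prop :=
  compact (safe_set F g) /\ interior (safe_set F g) 0.

Definition schur_stable (n : nat) (M : 'M[R]_n) : Prop :=
  forall z : R[i], eigenvalue (map_mx (fun a : R => Complex a 0) M) z -> `|z| < 1.

Definition stabilizable (n m : nat) (A : 'M[R]_n) (B : 'M[R]_(n, m)) : Prop :=
  exists K : 'M[R]_(m, n), schur_stable (A + B *m K).

Definition Q_lipschitz_on (n N : nat) (f : 'cV[R]_n -> 'cV[R]_N) (D : set 'cV[R]_n) : Prop :=
  exists L : R, forall x y, D x -> D y -> `|f x - f y| <= L * `|x - y|.

Definition datamx (p T : nat) (v : nat -> 'cV[R]_p) (shift : nat) : 'M[R]_(p, T) :=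
  \matrix_(i < p, j < T) v (j + shift)%N i 0.

Definition lambda_contractive (s n : nat) (F : 'M[R]_(s, n)) (g : 'cV[R]_s)
  (lam : R) (f : 'cV[R]_n -> 'cV[R]_n) : Prop :=
  forall x, safe_set F g x -> mx_le (F *m f x) (lam *: g).

(* Robust invariance (disturbance-free: no disturbance to quantify over). *)
Definition robustly_invariant (s n : nat) (F : 'M[R]_(s, n)) (g : 'cV[R]_s)
  (f : 'cV[R]_n -> 'cV[R]_n) : Prop :=
  forall xs : nat -> 'cV[R]_n, safe_set F g (xs 0%N) ->
    (forall t, xs t.+1 = f (xs t)) -> forall t, safe_set F g (xs t).

End Defs.

(** Writing the system as [x+ = [A1 + A2 As, A2] [x; Q x] + B u], the data
    satisfy [X1 = [A1 + A2 As, A2] V0 + B U0]; since [G = [G1 G2]] is a right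
    inverse of [V0], [X1 G = [A1 + A2 As, A2] + B U0 G], so the closed loop is
    [x |-> X1 G1 x + X1 G2 Q x].  On the safe set, [P_s >= 0] and
    [P_s F = F X1 G1] bound [F X1 G1 x] by [P_s g], and the choice of [G2]
    bounds [F X1 G2 Q x] by [l^d]; the sum is at most [lam g].  As [0] lies in
    the safe set, [g >= 0], so [lam g <= g] and contractivity gives invariance. *)
From HB Require Import structures.
From mathcomp Require Import all_boot all_order all_algebra.
From mathcomp Require Import all_classical all_reals all_analysis.
From mathcomp Require Import complex.
From mathcomp Require Import lra.
Set Implicit Arguments. Unset Strict Implicit. Unset Printing Implicit Defensive.
Import Order.TTheory GRing.Theory Num.Theory numFieldNormedType.Exports.
Local Open Scope ring_scope.
Local Open Scope classical_set_scope.

Section DataMatrices.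
Variable R : realType.

Lemma datamxMl p q T (M : 'M[R]_(q, p)) (v : nat -> 'cV[R]_p) sh :
  M *m datamx T v sh = datamx T (fun t => M *m v t) sh.
Proof. by apply/matrixP=> i j; rewrite !mxE; apply: eq_bigr => k _; rewrite !mxE. Qed.

Lemma datamxD p T (v w : nat -> 'cV[R]_p) sh :
  datamx T v sh + datamx T w sh = datamx T (fun t => v t + w t) sh.
Proof. by apply/matrixP=> i j; rewrite !mxE. Qed.

Lemma datamx_col p q T (v : nat -> 'cV[R]_p) (w : nat -> 'cV[R]_q) sh :
  col_mx (datamx T v sh) (datamx T w sh) = datamx T (fun t => col_mx (v t) (w t)) sh.
Proof. by apply/matrixP=> i j; rewrite !mxE; case: splitP => k _; rewrite !mxE. Qed.

Lemma datamx_step p q m T (A : 'M[R]_(p, q)) (B : 'M[R]_(p, m))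
    (x : nat -> 'cV[R]_p) (z : nat -> 'cV[R]_q) (u : nat -> 'cV[R]_m) :
  (forall t, (t < T)%N -> x t.+1 = A *m z t + B *m u t) ->
  datamx T x 1 = A *m datamx T z 0 + B *m datamx T u 0.
Proof.
move=> Hx; rewrite !datamxMl datamxD; apply/matrixP=> i j.
by rewrite !mxE addn0 addn1 (Hx j (ltn_ord j)) !mxE.
Qed.

Lemma data_closed_loop p q m T (M : 'M[R]_(p, q)) (B : 'M[R]_(p, m))
    (V0 : 'M[R]_(q, T)) (U0 : 'M[R]_(m, T)) (X1 : 'M[R]_(p, T)) (G : 'M[R]_(T, q)) :
  X1 = M *m V0 + B *m U0 -> V0 *m G = 1%:M -> M + B *m (U0 *m G) = X1 *m G.
Proof. by move=> -> HG; rewrite mulmxDl -!mulmxA HG mulmx1. Qed.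

End DataMatrices.

Lemma lifted_linearization (R : realType) n N (A1 : 'M[R]_n) (A2 : 'M[R]_(n, N))
    (As : 'M[R]_(N, n)) (x : 'cV[R]_n) (y : 'cV[R]_N) :
  row_mx A1 A2 *m col_mx x y = row_mx (A1 + A2 *m As) A2 *m col_mx x (y - As *m x).
Proof. by rewrite !mul_row_col mulmxBr mulmxDl mulmxA addrACA subrr addr0. Qed.

Section PolyhedralContractivity.
Variables (R : realType) (s n : nat) (F : 'M[R]_(s, n)) (g : 'cV[R]_s).

Lemma mx_le_wpmul2l (P : 'M[R]_s) (a b : 'cV[R]_s) :
  (forall i j, 0 <= P i j) -> mx_le a b -> mx_le (P *m a) (P *m b).
Proof.
move=> P0 le_ab i j; rewrite !mxE; apply: ler_sum => k _.
by apply: ler_wpM2l; [exact: P0 | exact: le_ab].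
Qed.

Lemma lambda_contractive_certificate (lam : R) (M : 'M[R]_n)
    (w : 'cV[R]_n -> 'cV[R]_n) (Ps : 'M[R]_s) (ld : 'cV[R]_s) :
  (forall i j, 0 <= Ps i j) -> Ps *m F = F *m M ->
  mx_le (Ps *m g) (lam *: g - ld) ->
  (forall x, safe_set F g x -> mx_le (F *m w x) ld) ->
  lambda_contractive F g lam (fun x => M *m x + w x).
Proof.
move=> Ps0 PsF le_Psg le_w x Hx i j.
have le_PsFx := mx_le_wpmul2l Ps0 Hx i j.
have := le_Psg i j; have := le_w x Hx i j.
rewrite mulmxDr mulmxA -PsF -mulmxA !mxE; rewrite !mxE in le_PsFx; lra.
Qed.

Lemma safe_set0_ge0 : safe_set F g 0 -> forall i j, 0 <= g i j.
Proof. by move=> H0 i j; have := H0 i j; rewrite mulmx0 mxE. Qed.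

Lemma contractive_robustly_invariant (lam : R) (f : 'cV[R]_n -> 'cV[R]_n) :
  0 <= lam <= 1 -> safe_set F g 0 ->
  lambda_contractive F g lam f -> robustly_invariant F g f.
Proof.
move=> /andP[lam0 lam1] /safe_set0_ge0 g0 Hf xs H0 Hxs; elim=> // t IH.
rewrite Hxs => i j; apply: le_trans (Hf _ IH i j) _.
by rewrite mxE; have := g0 i j; nra.
Qed.

End PolyhedralContractivity.

Theorem theorem1 (R : realType) (n N m s T : nat)
  (A1 : 'M[R]_n) (A2 : 'M[R]_(n, N)) (B : 'M[R]_(n, m))
  (S : 'cV[R]_n -> 'cV[R]_N) (As : 'M[R]_(N, n))
  (F : 'M[R]_(s, n)) (g : 'cV[R]_s)
  (xd : nat -> 'cV[R]_n) (ud : nat -> 'cV[R]_m)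
  (lam : R) (G1 : 'M[R]_(T, n)) (G2 : 'M[R]_(T, N)) (Ps : 'M[R]_s) (ld : 'cV[R]_s) :
  let Q := fun x : 'cV[R]_n => S x - As *m x in
  let U0 : 'M[R]_(m, T) := datamx T ud 0 in
  let X0 : 'M[R]_(n, T) := datamx T xd 0 in
  let X1 : 'M[R]_(n, T) := datamx T xd 1 in
  let V0 : 'M[R]_(n + N, T) := col_mx X0 (datamx T (fun t => Q (xd t)) 0) in
  let safe := safe_set F g in
  (* system and known nonlinearity *)
  (forall x, differentiable S x) -> S 0 = 0 ->
  (forall v, 'd S 0 v = As *m v) ->
  stabilizable (A1 + A2 *m As) B ->
  Q_lipschitz_on Q safe ->
  polyhedral_Cset F g ->
  (* data collected from the disturbance-free system *)
  (forall t, (t < T)%N ->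
     xd t.+1 = row_mx A1 A2 *m col_mx (xd t) (S (xd t)) + B *m ud t) ->
  row_free V0 -> (n + N + 1 <= T)%N ->
  0 < lam <= 1 ->
  (* l^d_i = min_{G} max_{x in safe} F_i X1 G Q(x), attained by G2 *)
  (forall i : 'I_s,
     (forall x, safe x -> (row i F *m X1 *m G2 *m Q x) 0 0 <= ld i 0) /\
     (exists2 x, safe x & (row i F *m X1 *m G2 *m Q x) 0 0 = ld i 0) /\
     (forall G : 'M[R]_(T, N),
        exists2 x, safe x & ld i 0 <= (row i F *m X1 *m G *m Q x) 0 0)) ->
  (* LP-type conditions *)
  mx_le (Ps *m g) (lam *: g - ld) ->
  Ps *m F = F *m X1 *m G1 ->
  V0 *m row_mx G1 G2 = 1%:M ->
  (forall i j, 0 <= Ps i j) ->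
  let K1 := U0 *m G1 in
  let K2 := U0 *m G2 in
  let fcl := fun x : 'cV[R]_n =>
    row_mx A1 A2 *m col_mx x (S x) + B *m (K1 *m x + K2 *m Q x) in
  lambda_contractive F g lam fcl /\ robustly_invariant F g fcl.
Proof.
move=> Q U0 X0 X1 V0 safe _ _ _ _ _ [_ /nbhs_singleton safe0] Hdata _ _
  /andP[lam0 lam1] Hld le_Psg PsF HV0 Ps0 K1 K2 fcl.
have HX1 : X1 = row_mx (A1 + A2 *m As) A2 *m V0 + B *m U0.
  rewrite /V0 datamx_col; apply: datamx_step => t /Hdata ->.
  by rewrite (lifted_linearization _ _ As).
have -> : fcl = fun x => X1 *m G1 *m x + X1 *m G2 *m Q x.
  apply/funext=> x.
  have -> : X1 *m G1 *m x + X1 *m G2 *m Q x = X1 *m row_mx G1 G2 *m col_mx x (Q x).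
    by rewrite -[RHS]mulmxA mul_row_col mulmxDr !mulmxA.
  rewrite -(data_closed_loop HX1 HV0) mulmxDl /fcl (lifted_linearization _ _ As).
  by congr (_ + _); rewrite /K1 /K2 -!mulmxA mul_row_col !mulmxDr.
have contr : lambda_contractive F g lam (fun x => X1 *m G1 *m x + X1 *m G2 *m Q x).
  apply: lambda_contractive_certificate Ps0 _ le_Psg _; first by rewrite PsF mulmxA.
  move=> x Hx i j; rewrite (ord1 j) !mulmxA; have := (Hld i).1 x Hx.
  by rewrite -!row_mul [X in X <= _ -> _]mxE.
split; first exact: contr.
by apply: contractive_robustly_invariant safe0 contr; rewrite ltW.
Qed.
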